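(* Let $k\ge 2$ be an integer and let $\mathcal H_{k\text{-word}}$ be the class of $k$-word-representable graphs. Then for every $p\in[0,1]$, $$\mathrm{ed}_{\mathcal H_{k\text{-word}}}(p)=\min\{p,\;1-p\}.$$ Consequently $\max\{\mathrm{dist}(G,\mathcal H_{k\text{-word}}) : |V(G)|=n\}=\tfrac12-o(1)$ as $n\to\infty$. Moreover, for every $\epsilon>0$ and every graph $G$ on $n\ge2$ vertices, if $\mathrm{dist}(G,\mathcal H_{k\text{-word}})\ge\tfrac12-\epsilon$, then $|E(G)|/\binom n2\in[\tfrac12-\epsilon,\tfrac12+\epsilon]$.
   Context: A word over an alphabet $V$ represents a graph $G=(V,E)$ if for all distinct $x,y\in V$: $xy\in E$ if and only if the occurrences of $x$ and $y$ alternate in the word. $G$ is $k$-word-representable if it is represented by a word in which every letter of $V$ occurs exactly $k$ times; $\mathcal H_{k\text{-word}}$ is the (hereditary) class of such graphs. For graphs $G,H$ on the same $n$-vertex set, $\mathrm{dist}(G,H)=|E(G)\triangle E(H)|/\binom n2$. For a hereditary property $\mathcal H$, $\mathrm{dist}(G,\mathcal H)=\min\{\mathrm{dist}(G,H): H\in\mathcal H,\ V(H)=V(G)\}$, and $\mathrm{ed}_{\mathcal H}(p)=\lim_{n\to\infty}\max\{\mathrm{dist}(G,\mathcal H): |V(G)|=n,\ |E(G)|=\lfloor p\binom n2\rfloor\}$ (the limit exists). *)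

From HB Require Import structures.
From mathcomp Require Import all_boot all_order all_algebra.
From mathcomp Require Import all_classical all_reals all_analysis.
Set Implicit Arguments. Unset Strict Implicit. Unset Printing Implicit Defensive.
Import Order.TTheory GRing.Theory Num.Theory.
Local Open Scope ring_scope.

Definition simple_graph (n : nat) (E : {set {set 'I_n}}) : bool :=
  [forall e in E, #|e| == 2%N].

Definition alternate (n : nat) (w : seq 'I_n) (x y : 'I_n) : bool :=
  sorted (fun a b => a != b) (seq.filter (fun z => (z == x) || (z == y)) w).

Definition word_represents (n : nat) (w : seq 'I_n) (E : {set {set 'I_n}}) : Prop :=
  forall x y : 'I_n, x != y -> ([set x; y] \in E) = alternate w x y.

Definition kword_representable (k n : nat) (E : {set {set 'I_n}}) : Prop :=
  simple_graph E /\
  exists w : seq 'I_n, (forall x : 'I_n, count_mem x w = k) /\ word_represents w E.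

Definition symdiff_card (n : nat) (E F : {set {set 'I_n}}) : nat :=
  #|(E :\: F) :|: (F :\: E)|.

Definition dist (R : realType) (n : nat) (E F : {set {set 'I_n}}) : R :=
  (symdiff_card E F)%:R / ('C(n, 2))%:R.

(* dist(G, H_{k-word}) : minimum over all k-word-representable graphs on the
   same vertex set (this set is nonempty; the default 1 is never reached for
   n >= 2 and irrelevant otherwise). *)
Definition dist_kword (R : realType) (k n : nat) (E : {set {set 'I_n}}) : R :=
  \big[Num.min/1]_(F : {set {set 'I_n}} | `[< kword_representable k F >])
     dist R E F.

Definition max_dist_density (R : realType) (k : nat) (p : R) (n : nat) : R :=
  \big[Num.max/0]_(E : {set {set 'I_n}} |
        simple_graph E && (#|E|%:Z == Num.floor (p * ('C(n, 2))%:R)))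
     dist_kword R k E.

Definition max_dist (R : realType) (k n : nat) : R :=
  \big[Num.max/0]_(E : {set {set 'I_n}} | simple_graph E) dist_kword R k E.

Definition edge_density (R : realType) (n : nat) (E : {set {set 'I_n}}) : R :=
  (#|E|)%:R / ('C(n, 2))%:R.

From HB Require Import structures.
From mathcomp Require Import all_boot all_order all_algebra.
From mathcomp Require Import all_classical all_reals all_analysis.
From mathcomp Require Import zify lra.
Import Order.TTheory GRing.Theory Num.Theory.
Import numFieldNormedType.Exports.
Set Implicit Arguments. Unset Strict Implicit. Unset Printing Implicit Defensive.

(* The empty and the complete graph are k-word-representable for k >= 2 (the words
   0^k 1^k ... and (0 1 ... n-1)^k), so a graph of edge density d is within min(d, 1-d)
   of the class.  Conversely, a k-word-representable graph on n vertices is determined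
   by a word of length kn, so there are at most n^(kn) = 2^O(n log n) of them, while
   the Hamming ball of radius D = min(m, N-m) - 2N/q around any graph meets at most
   (D+1) C(N, D) graphs, where N = C(n, 2).  Since C(N, D) 2^(N/q^2) <= C(N, m)
   (the ratios of consecutive binomials are bounded away from 1 on [D, D + N/q]),
   counting yields a graph with m edges that is far from every k-word-representable
   graph once n is large. *)

Section SymmetricDifference.
Variable T : finType.
Implicit Types A B C : {set T}.

Definition symdiff A B : {set T} := (A :\: B) :|: (B :\: A).

Lemma symdiffK A B : symdiff A (symdiff B A) = B.
Proof. by apply/setP => x; rewrite !inE; case: (x \in A); case: (x \in B). Qed.

Lemma symdiff_subset A B C : A \subset C -> B \subset C -> symdiff A B \subset C.
Proof.
move=> /fintype.subsetP sAC /fintype.subsetP sBC; apply/fintype.subsetP => x.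
by rewrite !inE => /orP[] /andP[_]; [exact: sAC | exact: sBC].
Qed.

Lemma card_small_subsets A D :
  #|[set S : {set T} | S \subset A & #|S| <= D]| <= \sum_(i < D.+1) 'C(#|A|, i).
Proof.
elim: D => [|D IH].
  rewrite big_ord1 -cards_draws; apply/subset_leq_card/fintype.subsetP => S.
  by rewrite !inE leqn0.
rewrite big_ord_recr /= -cards_draws; apply: leq_trans (leq_add IH (leqnn _)).
apply: leq_trans (leq_card_setU _ _); apply/subset_leq_card/fintype.subsetP => S.
by rewrite !inE leq_eqVlt ltnS; case: (S \subset A) => //=; rewrite orbC.
Qed.

End SymmetricDifference.

Section Words.
Variable T : eqType.

Lemma count_flatten_nseq x k (s : seq T) :
  count_mem x (flatten (nseq k s)) = k * count_mem x s.
Proof. by elim: k => //= k IH; rewrite count_cat IH mulSn. Qed.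

Lemma filter_flatten_nseq (P : pred T) k (s : seq T) :
  seq.filter P (flatten (nseq k s)) = flatten (nseq k (seq.filter P s)).
Proof. by elim: k => //= k IH; rewrite filter_cat IH. Qed.

Lemma count_flatten_stutter x k (s : seq T) :
  count_mem x (flatten [seq nseq k z | z <- s]) = k * count_mem x s.
Proof.
by elim: s => [|a s IH] /=; rewrite ?muln0 // count_cat IH count_nseq mulnDr mulnC.
Qed.

Lemma filter_flatten_stutter (P : pred T) k (s : seq T) :
  seq.filter P (flatten [seq nseq k z | z <- s]) =
  flatten [seq nseq k z | z <- seq.filter P s].
Proof.
elim: s => //= a s IH; rewrite filter_cat IH filter_nseq.
by case: (P a); rewrite ?mul1n ?mul0n.
Qed.

Lemma sorted_neq_flatten_nseq (a b : T) k :
  a != b -> sorted (fun u v => u != v) (flatten (nseq k [:: a; b])).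
Proof.
move=> ab; have ab_path j : path (fun u v => u != v) b (flatten (nseq j [:: a; b])).
  by elim: j => //= j ->; rewrite eq_sym ab.
by case: k => //= k; rewrite ab ab_path.
Qed.

End Words.

Lemma size_sum_count_mem (T : finType) (w : seq T) : size w = \sum_x count_mem x w.
Proof.
elim: w => [|a w IH] /=; first by rewrite big1.
rewrite IH big_split /= -add1n; congr (_ + _).
by rewrite (bigD1 a) //= eqxx big1 // => x /negPf; rewrite eq_sym => ->.
Qed.

Section Graphs.
Variable n : nat.
Implicit Types (E F : {set {set 'I_n}}) (w : seq 'I_n).

Definition pairs : {set {set 'I_n}} := [set e : {set 'I_n} | #|e| == 2].

Lemma card_pairs : #|pairs| = 'C(n, 2).
Proof. by rewrite card_draws card_ord. Qed.

Lemma simple_graphE E : simple_graph E = (E \subset pairs).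
Proof.
apply/forallP/fintype.subsetP => [sE e eE | sE e]; first by have := sE e; rewrite eE inE.
by apply/implyP => /sE; rewrite inE.
Qed.

Lemma exists_graph_card m : m <= 'C(n, 2) -> exists E, simple_graph E /\ #|E| = m.
Proof.
rewrite -bin_gt0 -card_pairs -cards_draws => /card_gt0P[E].
by rewrite inE -simple_graphE => /andP[sE /eqP cE]; exists E.
Qed.

Lemma symdiff_card_set0 E : symdiff_card E finset.set0 = #|E|.
Proof. by rewrite /symdiff_card finset.setD0 finset.set0D finset.setU0. Qed.

Lemma symdiff_card_pairs E : simple_graph E -> symdiff_card E pairs = 'C(n, 2) - #|E|.
Proof.
rewrite simple_graphE /symdiff_card => sE.
have /eqP-> : E :\: pairs == finset.set0 by rewrite finset.setD_eq0.
by rewrite finset.set0U cardsD (finset.setIidPr sE) card_pairs.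
Qed.

Definition represented_graph w : {set {set 'I_n}} :=
  [set [set x; y] | x in 'I_n, y in 'I_n & (x != y) && alternate w x y].

Lemma word_represents_graph w F :
  simple_graph F -> word_represents w F -> F = represented_graph w.
Proof.
rewrite simple_graphE => /fintype.subsetP sF rF; apply/setP => e.
apply/idP/imset2P => [eF | [x y _]]; last by rewrite !inE => /and3P[_ xy al] ->; rewrite rF.
have /cards2P[x [y [xy def_e]]] : #|e| == 2 by have := sF e eF; rewrite inE.
by exists x y; rewrite // !inE xy -rF // -def_e.
Qed.

Lemma count_mem_enum x : count_mem x (enum 'I_n) = 1.
Proof. by rewrite count_uniq_mem ?enum_uniq ?mem_enum. Qed.

Lemma filter_enum_pair x y : x != y ->
  exists a b, a != b /\ [seq z <- enum 'I_n | (z == x) || (z == y)] = [:: a; b].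
Proof.
move=> xy; set r := seq.filter _ _.
have ur : uniq r by rewrite filter_uniq ?enum_uniq.
have /perm_size : perm_eq r [:: x; y].
  apply: uniq_perm => //=; first by rewrite inE xy.
  by move=> z; rewrite mem_filter mem_enum andbT !inE.
by move: ur; case: r => [|a [|b [|]]] //=; rewrite inE andbT => ab; exists a, b.
Qed.

Lemma kword_representable_pairs k : kword_representable k pairs.
Proof.
split; first by rewrite simple_graphE.
exists (flatten (nseq k (enum 'I_n))); split.
  by move=> x; rewrite count_flatten_nseq count_mem_enum muln1.
move=> x y xy; rewrite inE cards2 xy /alternate filter_flatten_nseq.
by have [a [b [ab ->]]] := filter_enum_pair xy; rewrite sorted_neq_flatten_nseq.
Qed.

Lemma kword_representable_set0 k :
  1 < k -> kword_representable k (finset.set0 : {set {set 'I_n}}).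
Proof.
move=> k_gt1; split; first by rewrite simple_graphE finset.sub0set.
exists (flatten [seq nseq k z | z <- enum 'I_n]); split.
  by move=> x; rewrite count_flatten_stutter count_mem_enum muln1.
move=> x y xy; rewrite inE /alternate filter_flatten_stutter.
have [a [b [_ ->]]] := filter_enum_pair xy.
by case: k k_gt1 => [|[|k]] //= _; rewrite eqxx.
Qed.

Lemma kword_representable_graph k F : kword_representable k F ->
  exists t : (k * n).-tuple 'I_n, F = represented_graph t.
Proof.
move=> [sF [w [cw rw]]].
have size_w : size w == k * n.
  by rewrite size_sum_count_mem (eq_bigr _ (fun x _ => cw x)) sum_nat_const card_ord mulnC.
by exists (Tuple size_w); apply: word_represents_graph.
Qed.

Lemma exists_far_graph k m D :
  n ^ (k * n) * \sum_(i < D.+1) 'C('C(n, 2), i) < 'C('C(n, 2), m) ->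
  exists E, [/\ simple_graph E, #|E| = m &
    forall F, kword_representable k F -> D < symdiff_card E F].
Proof.
move=> count_lt.
pose small := [set S : {set {set 'I_n}} | S \subset pairs & #|S| <= D].
pose near_rep := [set symdiff (represented_graph ts.1) ts.2
  | ts : (k * n).-tuple 'I_n * {set {set 'I_n}} in finset.setX [set: _] small].
have card_near : #|near_rep| <= n ^ (k * n) * \sum_(i < D.+1) 'C('C(n, 2), i).
  apply: leq_trans (leq_imset_card _ _) _.
  by rewrite cardsX cardsT card_tuple card_ord leq_mul2l -card_pairs card_small_subsets orbT.
have : ~~ ([set E : {set {set 'I_n}} | E \subset pairs & #|E| == m] \subset near_rep).
  apply: contraL count_lt => /subset_leq_card; rewrite cards_draws card_pairs -leqNgt.
  by move/leq_trans; apply.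
case/fintype.subsetPn => E; rewrite inE -simple_graphE => /andP[sE /eqP cE] E_far.
exists E; split => // F /[dup] /kword_representable_graph[t ->] [sF _].
rewrite ltnNge; apply: contra E_far => close.
apply/imsetP; exists (t, symdiff E (represented_graph t)); last by rewrite /= symdiffK.
by rewrite !inE close andbT; apply: symdiff_subset; rewrite -simple_graphE.
Qed.

End Graphs.


Lemma leq_expn2r m n e : m <= n -> m ^ e <= n ^ e.
Proof. by case: e => // e mn; rewrite leq_exp2r. Qed.

Lemma leq_bin_succ N j : 2 * j.+1 <= N -> 'C(N, j) <= 'C(N, j.+1).
Proof.
move=> hj; rewrite -(leq_pmul2l (ltn0Sn j)) mul_bin_left leq_mul2r.
by apply/orP; right; lia.
Qed.

Lemma leq_bin2r_half N i j : i <= j -> 2 * j <= N -> 'C(N, i) <= 'C(N, j).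
Proof.
elim: j => [|j IH]; first by rewrite leqn0 => /eqP->.
rewrite leq_eqVlt ltnS => /orP[/eqP-> // | ij] hj.
exact: leq_trans (IH ij ltac:(lia)) (leq_bin_succ hj).
Qed.

Lemma sum_bin_le N D : 2 * D <= N -> \sum_(i < D.+1) 'C(N, i) <= D.+1 * 'C(N, D).
Proof.
move=> hD; rewrite -[X in X * _]card_ord -sum_nat_const.
by apply: leq_sum => i _; apply: leq_bin2r_half hD; rewrite -ltnS.
Qed.

Lemma bin_ratio_expn N D s :
  'C(N, D) * (N - (D + s)) ^ s <= 'C(N, D + s) * (D + s) ^ s.
Proof.
elim: s D => [|s IH] D; first by rewrite addn0.
set M := D + s.+1.
have step : 'C(N, D) * (N - M) <= 'C(N, D.+1) * M.
  rewrite -(leq_pmul2l (ltn0Sn D)) mulnCA [in leqRHS]mulnA mul_bin_left.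
  rewrite [in leqRHS]mulnAC [in leqRHS]mulnC leq_mul2l [(N - D) * M]mulnC.
  by apply/orP; right; apply: leq_mul; rewrite /M; lia.
have := IH D.+1; rewrite addSnnS -/M => IH1.
rewrite !expnS mulnA; apply: leq_trans (leq_mul step (leqnn _)) _.
by rewrite mulnAC [M * _]mulnC mulnA leq_mul2r IH1 orbT.
Qed.

Lemma bernoulli_expn M x q : M ^ q * (M + q * x) <= M * (M + x) ^ q.
Proof.
elim: q => [|q IH]; first by rewrite mul0n addn0 !expn0 mul1n muln1.
apply: (@leq_trans ((M + x) * (M ^ q * (M + q * x)))).
  rewrite expnS; set P := M ^ q; nia.
by rewrite [(M + x) ^ _]expnS [in leqRHS]mulnCA leq_mul2l IH orbT.
Qed.

Lemma expn_double M x q : 0 < q -> M <= q * x -> 2 * M ^ q <= (M + x) ^ q.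
Proof.
move=> q_gt0 hM; have [->|M_gt0] := posnP M; first by rewrite exp0n.
rewrite -(leq_pmul2l M_gt0); apply: leq_trans (bernoulli_expn M x q).
by rewrite [2 * _]mulnC mulnCA leq_pmul2l ?expn_gt0 ?M_gt0 //; lia.
Qed.

Lemma expn_gain M x q t L : 0 < q -> M <= q * x -> q * t <= L ->
  2 ^ t * M ^ L <= (M + x) ^ L.
Proof.
move=> q_gt0 hM /subnKC <-; rewrite !expnD mulnA leq_mul ?leq_expn2r ?leq_addr //.
elim: t => [|t IH]; first by rewrite muln0.
rewrite mulnS !expnD expnS mulnACA.
exact: leq_mul (expn_double q_gt0 hM) IH.
Qed.

Lemma bin_shift_gain N q D s : 0 < q -> 2 * (D + 2 * s) <= N -> D + s <= q * (2 * s) ->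
  'C(N, D) * 2 ^ (s %/ q) <= 'C(N, D + 2 * s).
Proof.
move=> q_gt0 hN hq; set M := D + s.
have [M0|M_gt0] := posnP M.
  have [-> ->] : D = 0 /\ s = 0 by rewrite /M in M0; lia.
  by rewrite div0n muln1.
have gain : 2 ^ (s %/ q) * M ^ s <= (N - M) ^ s.
  apply: leq_trans (expn_gain q_gt0 hq _) (leq_expn2r _ _); first by rewrite mulnC leq_divM.
  by rewrite /M; lia.
have ratio := bin_ratio_expn N D s; rewrite -/M in ratio.
apply: (@leq_trans 'C(N, M)); last by apply: leq_bin2r_half; rewrite /M; lia.
rewrite -(leq_pmul2r (_ : 0 < M ^ s)) ?expn_gt0 ?M_gt0 // -mulnA.
exact: leq_trans (leq_mul (leqnn _) gain) ratio.
Qed.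


Section Asymptotics.
Local Open Scope classical_set_scope.

Lemma sqr_le_exp2 t : t.+1 ^ 2 <= 4 * 2 ^ t.
Proof.
elim: t => // t IH; case: t IH => [|[|t]] IH //.
rewrite [2 ^ _]expnS; move: IH; set P := 2 ^ _ => IH.
rewrite !expnS !expn0 !muln1 in IH *; nia.
Qed.

Lemma leq_pred_bin2 n : n.-1 <= 'C(n, 2).
Proof.
have [n_le1|n_gt1] := leqP n 1; first by case: n n_le1 => [|[]].
have := mul_bin_diag n 1; rewrite bin1; nia.
Qed.

Lemma trunc_log2_sublinear C : \forall n \near \oo, C * (trunc_log 2 n).+1 <= n.
Proof.
near=> n; have n_ge : (C * (4 * C)).+1 <= n by near: n; exact: nbhs_infty_ge.
set t := trunc_log 2 n.
have [big_t|small_t] := leqP (4 * C) t.+1; last first.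
  by apply: leq_trans (ltnW n_ge); rewrite leq_mul2l ltnW ?orbT.
apply: leq_trans (trunc_logP (isT : 1 < 2) (leq_trans (ltn0Sn _) n_ge)).
rewrite -(leq_pmul2l (isT : 0 < 4)); apply: leq_trans (sqr_le_exp2 t).
by rewrite mulnA expnS expn1 leq_mul2r big_t orbT.
Unshelve. all: by end_near.
Qed.

Lemma expn_lt_exp2_bin2 k c : 0 < c ->
  \forall n \near \oo, n ^ (k * n + 2) < 2 ^ ('C(n, 2) %/ c).
Proof.
move=> c_gt0; near=> n.
have n_ge2 : 2 <= n by near: n; exact: nbhs_infty_ge.
have hlog : 4 * c * (k + 2) * (trunc_log 2 n).+1 <= n.
  by near: n; exact: trunc_log2_sublinear.
set u := (trunc_log 2 n).+1 in hlog.
have two_N : 2 * 'C(n, 2) = n * (n - 1) by rewrite -mul_bin_diag bin1 subn1.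
apply: (@leq_trans ((2 ^ u) ^ (k * n + 2))); first by rewrite ltn_exp2r ?addn2 // trunc_log_ltn.
rewrite -expnM leq_exp2l // leq_divRL //.
have kn2 : k * n + 2 <= (k + 2) * n by nia.
nia.
Unshelve. all: by end_near.
Qed.

Theorem far_graph_exists k q : 0 < q -> \forall n \near \oo, forall m, m <= 'C(n, 2) ->
  exists E : {set {set 'I_n}}, [/\ simple_graph E, #|E| = m &
    forall F, kword_representable k F ->
      minn m ('C(n, 2) - m) <= symdiff_card E F + 2 * ('C(n, 2) %/ q)].
Proof.
move=> q_gt0; have qq_gt0 : 0 < q * q by rewrite muln_gt0 q_gt0.
near=> n.
have n_ge2 : 2 <= n by near: n; exact: nbhs_infty_ge.
have n_gt_q : q < n by near: n; exact: nbhs_infty_ge.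
have growth : n ^ (k * n + 2) < 2 ^ ('C(n, 2) %/ q %/ q).
  by rewrite -divnMA; near: n; exact: expn_lt_exp2_bin2 qq_gt0.
have q_le_N : q <= 'C(n, 2) by apply: leq_trans (leq_pred_bin2 n); lia.
move=> m le_mN; set N := 'C(n, 2) in le_mN q_le_N growth *.
set s := N %/ q in growth *; set m' := minn m (N - m).
have [m'_small|m'_big] := ltnP m' (2 * s).
  have [E [sE cE]] := exists_graph_card le_mN.
  by exists E; split => // F _; rewrite ltnW // ltn_addl.
set D := m' - 2 * s; have D_def : D + 2 * s = m' by rewrite subnK.
have two_N : 2 * N = n * (n - 1) by rewrite -mul_bin_diag bin1 subn1.
have N_lt : N < q * s.+1 by rewrite mulnC ltn_ceil.
have s_gt0 : 0 < s by rewrite divn_gt0.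
have two_m' : 2 * m' <= N by rewrite /m'; lia.
have gain : 'C(N, D) * 2 ^ (s %/ q) <= 'C(N, m').
  by rewrite -D_def; apply: bin_shift_gain => //; nia.
have D_lt : D.+1 * n ^ (k * n) < 2 ^ (s %/ q).
  apply: leq_ltn_trans growth; rewrite expnD mulnC leq_mul2l; apply/orP; right; nia.
have count : n ^ (k * n) * \sum_(i < D.+1) 'C(N, i) < 'C(N, m).
  have -> : 'C(N, m) = 'C(N, m') by rewrite /m' /minn; case: ltnP => // _; rewrite bin_sub.
  apply: leq_trans gain; apply: (@leq_ltn_trans (n ^ (k * n) * (D.+1 * 'C(N, D)))).
    by rewrite leq_mul2l sum_bin_le ?orbT //; lia.
  by rewrite mulnA [_ * D.+1]mulnC [in ltnRHS]mulnC ltn_pmul2r // bin_gt0; lia.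
have [E [sE cE far]] := exists_far_graph count.
by exists E; split => // F /far; lia.
Unshelve. all: by end_near.
Qed.

End Asymptotics.

Section Distances.
Local Open Scope classical_set_scope.
Local Open Scope ring_scope.
Variable R : realType.
Implicit Types (p e : R) (k n : nat).

Lemma dist_kword_le k n (E F : {set {set 'I_n}}) :
  kword_representable k F -> dist_kword R k E <= dist R E F.
Proof. by move=> rF; apply: bigmin_le_cond; apply/asboolP. Qed.

(* The hypothesis [b <= 1] accounts for the default value of the empty minimum. *)
Lemma dist_kword_ge k n (E : {set {set 'I_n}}) (b : R) : b <= 1 ->
  (forall F, kword_representable k F -> b <= dist R E F) -> b <= dist_kword R k E.
Proof. by move=> b_le1 far; apply: le_bigmin => // F /asboolP /far. Qed.

Lemma dist_kword_le_density k n (E : {set {set 'I_n}}) : (1 < k)%N -> (1 < n)%N ->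
  simple_graph E -> dist_kword R k E <= Num.min (edge_density R E) (1 - edge_density R E).
Proof.
move=> k_gt1 n_gt1 sE; have N_gt0 : 0 < ('C(n, 2))%:R :> R by rewrite ltr0n bin_gt0.
rewrite le_min; apply/andP; split.
  by have := dist_kword_le E (kword_representable_set0 n k_gt1); rewrite /dist symdiff_card_set0.
have := dist_kword_le E (kword_representable_pairs n k).
have card_le : (#|E| <= 'C(n, 2))%N by rewrite -card_pairs subset_leq_card // -simple_graphE.
by rewrite /dist symdiff_card_pairs // natrB // mulrBl divff ?gt_eqF.
Qed.

Lemma floor_truncn (x : R) : 0 <= x -> Num.floor x = (Num.truncn x)%:Z.
Proof. by rewrite -floor_ge0 truncEfloor; case: (Num.floor x). Qed.

Lemma min_density_le (x p N : R) : 0 < N -> x <= p * N < x + 1 ->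
  Num.min (x / N) (1 - x / N) <= Num.min p (1 - p) + N^-1.
Proof.
move=> N_gt0 /andP[x_le x_gt]; rewrite -lerBlDr le_min.
have d_le : x / N <= p by rewrite ler_pdivrMr.
have d_gt : p < (x + 1) / N by rewrite ltr_pdivlMr.
rewrite mulrDl mul1r in d_gt.
have [m1 m2] : Num.min (x / N) (1 - x / N) <= x / N /\ Num.min (x / N) (1 - x / N) <= 1 - x / N.
  by split; rewrite ge_min lexx ?orbT.
apply/andP; split; lra.
Qed.

Lemma nbhs_infty_ger_bin2 (r : R) : \forall n \near \oo, r <= ('C(n, 2))%:R.
Proof.
near=> n; have n_gt : ((Num.truncn r).+1 < n)%N by near: n; exact: nbhs_infty_ge.
apply: (le_trans (ltW (truncnS_gt r))); rewrite ler_nat.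
by apply: leq_trans (leq_pred_bin2 n); rewrite -ltnS prednK // (leq_trans _ n_gt).
Unshelve. all: by end_near.
Qed.

Lemma truncn_mul_le p N : 0 <= p <= 1 -> (Num.truncn (p * N%:R) <= N)%N.
Proof.
move=> /andP[p_ge0 p_le1]; rewrite truncn_le_nat.
by apply: (@le_lt_trans _ _ N%:R); rewrite ?ler_piMl ?ltr_nat.
Qed.

Lemma min_truncn_ge p N : 0 <= p <= 1 ->
  Num.min p (1 - p) * N%:R <= (minn (Num.truncn (p * N%:R)) (N - Num.truncn (p * N%:R)))%:R + 1.
Proof.
move=> p01; have /andP[p_ge0 p_le1] := p01; have m_leN := truncn_mul_le N p01.
have /andP[m_le m_gt] := truncn_itv (mulr_ge0 p_ge0 (ler0n R N)).
have mu_le : Num.min p (1 - p) * N%:R <= p * N%:R by rewrite ler_wpM2r // ge_min lexx.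
have mu_le' : Num.min p (1 - p) * N%:R <= (1 - p) * N%:R by rewrite ler_wpM2r // ge_min lexx orbT.
rewrite natr_min natrB // -lerBlDr le_min -natr1 in m_gt *; apply/andP; split; lra.
Qed.

Lemma edge_density_near_half k n (E : {set {set 'I_n}}) eps : (1 < k)%N -> (1 < n)%N ->
  simple_graph E -> 1 / 2 - eps <= dist_kword R k E ->
  1 / 2 - eps <= edge_density R E <= 1 / 2 + eps.
Proof.
move=> k_gt1 n_gt1 sE far; have := dist_kword_le_density k_gt1 n_gt1 sE.
by rewrite le_min => /andP[le_d le_1d]; apply/andP; split; lra.
Qed.

Lemma max_dist_le_half k n : (1 < k)%N -> (1 < n)%N -> max_dist R k n <= 1 / 2.
Proof.
move=> k_gt1 n_gt1; apply: bigmax_le => // E sE.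
apply: le_trans (dist_kword_le_density k_gt1 n_gt1 sE) _.
have [d_le|d_gt] := leP (edge_density R E) (1 / 2); rewrite ge_min ?d_le //.
by apply/orP; right; lra.
Qed.

Lemma max_dist_density_le_max_dist k p n : max_dist_density k p n <= max_dist R k n.
Proof. by apply: sub_bigmax => E /andP[]. Qed.

Lemma max_dist_density_ub k p e : (1 < k)%N -> 0 <= p <= 1 -> 0 < e ->
  \forall n \near \oo, max_dist_density k p n <= Num.min p (1 - p) + e.
Proof.
move=> k_gt1 /andP[p_ge0 p_le1] e_gt0; near=> n.
have n_gt1 : (1 < n)%N by near: n; exact: nbhs_infty_ge.
have N_ge : e^-1 <= ('C(n, 2))%:R by near: n; exact: nbhs_infty_ger_bin2.
have N_gt0 : 0 < ('C(n, 2))%:R :> R by rewrite ltr0n bin_gt0.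
have inv_le : ('C(n, 2))%:R^-1 <= e by rewrite -[e]invrK lef_pV2 ?posrE ?invr_gt0.
apply: bigmax_le => [|E /andP[sE /eqP cardE]].
  by apply: addr_ge0; rewrite ?le_min ?p_ge0 ?subr_ge0 // ltW.
have cardE' : #|E| = Num.truncn (p * ('C(n, 2))%:R).
  by apply/eqP; rewrite -eqz_nat -floor_truncn ?mulr_ge0 // cardE.
apply: le_trans (dist_kword_le_density k_gt1 n_gt1 sE) _; rewrite /edge_density cardE'.
apply: le_trans (@min_density_le _ p _ N_gt0 _) _; first by rewrite natr1 truncn_itv ?mulr_ge0.
by rewrite lerD2l.
Unshelve. all: by end_near.
Qed.

Lemma max_dist_density_lb k p e : 0 <= p <= 1 -> 0 < e ->
  \forall n \near \oo, Num.min p (1 - p) - e <= max_dist_density k p n.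
Proof.
move=> p01 e_gt0; have /andP[p_ge0 p_le1] := p01.
have [q q_gt0 q_gt] : exists2 q, (0 < q)%N & 4 < e * q%:R.
  by exists (Num.truncn (4 / e)).+1; rewrite // mulrC -ltr_pdivrMr // truncnS_gt.
move: (far_graph_exists k q_gt0) (nbhs_infty_ger_bin2 (2 / e)).
apply: filterS2 => n far N_ge; set N := 'C(n, 2) in far N_ge *.
have N_gt0 : 0 < N%:R :> R by apply: lt_le_trans N_ge; rewrite divr_gt0.
have pN_ge0 : 0 <= p * N%:R by rewrite mulr_ge0.
have [E [sE cardE farE]] := far _ (truncn_mul_le N p01).
apply: (@le_trans _ _ (dist_kword R k E)); last first.
  by apply: (bigmax_sup E) => //; rewrite sE cardE floor_truncn //=.
have mu_le : Num.min p (1 - p) <= p by rewrite ge_min lexx.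
apply: dist_kword_ge => [|F /farE far_F]; first lra.
have s_le : 4 * (N %/ q)%:R <= e * N%:R.
  apply: (@le_trans _ _ (e * q%:R * (N %/ q)%:R)); first by apply: ler_wpM2r; rewrite ?ler0n ?ltW.
  by rewrite -mulrA; apply: ler_wpM2l; [exact: ltW | rewrite -natrM ler_nat mulnC leq_divM].
move: far_F; rewrite -(ler_nat R) natrD natrM => far_F.
have := min_truncn_ge N p01; rewrite ler_pdivrMr // in N_ge.
rewrite /dist ler_pdivlMr // mulrBl; lra.
Qed.

End Distances.

Unset Implicit Arguments.
Local Open Scope classical_set_scope.
Local Open Scope ring_scope.

Theorem mainTheorem2 (R : realType) (k : nat) (hk : (2 <= k)%N) :
  (forall p : R, 0 <= p -> p <= 1 ->
     (fun n : nat => max_dist_density k p n) @ \oo --> (Num.min p (1 - p) : R))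
  /\ ((fun n : nat => @max_dist R k n) @ \oo --> (1 / 2 : R))
  /\ (forall (eps : R), 0 < eps -> forall (n : nat), (2 <= n)%N ->
        forall E : {set {set 'I_n}}, simple_graph E ->
          1 / 2 - eps <= @dist_kword R k n E ->
          1 / 2 - eps <= @edge_density R n E <= 1 / 2 + eps).
Proof.
have density_cvg (p : R) : 0 <= p -> p <= 1 ->
    (fun n : nat => max_dist_density k p n) @ \oo --> Num.min p (1 - p).
  move=> p_ge0 p_le1; have p01 : 0 <= p <= 1 by rewrite p_ge0.
  apply/cvgrPdist_le => e e_gt0.
  move: (max_dist_density_lb k p01 e_gt0) (max_dist_density_ub hk p01 e_gt0).
  by apply: filterS2 => n lb ub; rewrite ler_distlC lb ub.
split; first exact: density_cvg.
split; last by move=> eps _ n n_gt1 E; exact: edge_density_near_half.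
have half : Num.min (1 / 2) (1 - 1 / 2) = 1 / 2 :> R.
  have -> : 1 - 1 / 2 = 1 / 2 :> R by lra.
  exact: minxx.
apply: (@squeeze_cvgr _ _ _ _ (fun n => max_dist_density k (1 / 2) n) (fun=> 1 / 2)).
- near=> n; rewrite max_dist_density_le_max_dist max_dist_le_half //.
  by near: n; exact: nbhs_infty_ge.
- by move: (density_cvg (1 / 2)); rewrite half; apply; lra.
- exact: cvg_cst.
Unshelve. all: by end_near.
Qed.
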